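(* Let $p$ and $q$ be distinct primes. Let $G=Q\rtimes P$ be a finite non-abelian semi-direct product of a Sylow $q$-subgroup $Q$ by a non-normal cyclic Sylow $p$-subgroup $P$. Suppose that $Q$ is special, so either $Q$ is elementary abelian or $Q'=Z(Q)=\Phi(Q)$, and suppose that $P$ acts by conjugation trivially on $Q'$ and irreducibly on $Q/Q'$. Then $G$ is exponent-critical.
   Context: A finite group $G$ is exponent-critical if $\exp(G)$ is not the least common multiple of the exponents of the proper non-abelian subgroups of $G$. A $q$-group $Q$ is special if either $Q$ is elementary abelian or $Q$ has nilpotency class $2$ with $Q'=Z(Q)=\Phi(Q)$ elementary abelian. *)

From mathcomp Require Import all_boot all_fingroup all_solvable.
Set Implicit Arguments. Unset Strict Implicit. Unset Printing Implicit Defensive.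
Local Open Scope group_scope.

Definition exponent_critical (gT : finGroupType) (G : {group gT}) : Prop :=
  exponent G <> \big[lcmn/1%N]_(H : {group gT} | (H \proper G) && ~~ abelian H)
                   exponent H.

Definition special_qgroup (q : nat) (gT : finGroupType) (Q : {group gT}) : Prop :=
  q.-abelem Q \/
  [/\ nil_class Q = 2, Q^`(1) = 'Z(Q), 'Z(Q) = 'Phi(Q) & q.-abelem Q^`(1)].

From mathcomp Require Import all_boot all_fingroup all_solvable.
Set Implicit Arguments. Unset Strict Implicit. Unset Printing Implicit Defensive.
Local Open Scope group_scope.

(* A proper non-abelian subgroup H whose exponent is divisible by
   #|P| contains a Sylow p-subgroup of G, hence, up to conjugation, P itself.
   But a non-abelian overgroup H of P is all of G: since P normalises H :&: Q,
   irreducibility forces H :&: Q to lie in Q^`(1) (then H is abelian, as P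
   centralises Q^`(1)) or to cover Q modulo Q^`(1) <= 'Phi(Q) (then Q <= H).
   So the lcm of the exponents of proper non-abelian subgroups misses the full
   p-part of exp(G). *)

Lemma pfactor_dvdn_biglcm (I : finType) (P : pred I) (F : I -> nat) p a :
  prime p -> (forall i, P i -> 0 < F i) ->
  p ^ a.+1 %| \big[lcmn/1%N]_(i | P i) F i -> exists2 i, P i & p ^ a.+1 %| F i.
Proof.
move=> p_pr F_gt0 dvd_lcm; apply/exists_inP; apply: contraLR dvd_lcm.
rewrite negb_exists_in => /forall_inP ndvdF.
suff /andP[] : (0 < \big[lcmn/1%N]_(i | P i) F i) &&
               ~~ (p ^ a.+1 %| \big[lcmn/1%N]_(i | P i) F i) by [].
apply: (big_ind (fun m => (0 < m) && ~~ (p ^ a.+1 %| m))).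
- by rewrite pfactor_dvdn // logn1.
- move=> m n /andP[m_gt0 ndvd_m] /andP[n_gt0 ndvd_n].
  move: ndvd_m ndvd_n; rewrite lcmn_gt0 m_gt0 n_gt0 !pfactor_dvdn ?lcmn_gt0 ?m_gt0 //.
  by rewrite logn_lcm // leq_max negb_or => -> ->.
- by move=> i Pi; rewrite F_gt0 ?ndvdF.
Qed.

Lemma Sylow_subJ_dvd_card (gT : finGroupType) p (G H P : {group gT}) :
  p.-Sylow(G) P -> H \subset G -> #|P| %| #|H| ->
  exists2 g, g \in G & P :^ g \subset H.
Proof.
move=> sylP sHG dvd_PH; have [S sylS] := Sylow_exists p H.
have [sSH pS _] := and3P sylS.
have [g gG sSPg] := Sylow_subJ sylP (subset_trans sSH sHG) pS.
exists g => //; suff <- : S :=: P :^ g by [].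
apply/eqP; rewrite eqEcard sSPg cardJg (card_Hall sylS) dvdn_leq //.
by rewrite -(part_pnat_id (pHall_pgroup sylP)) partn_dvd.
Qed.

Section NonabelianOvergroups.

Variables (gT : finGroupType) (G Q P : {group gT}).
Hypotheses (defG : Q ><| P = G) (abP : abelian P).
Hypotheses (abQ' : abelian Q^`(1)) (sQ'Phi : Q^`(1) \subset 'Phi(Q)).
Hypotheses (cQ'P : P \subset 'C(Q^`(1))) (irrP : acts_irreducibly P (Q / Q^`(1)) 'Q).

Lemma overgroup_abelian (H : {group gT}) :
  P \subset H -> H \subset G -> H :&: Q \subset Q^`(1) -> abelian H.
Proof.
move=> sPH sHG sHQ_Q'; have [_ _ mulQP _ _] := sdprod_context defG.
have <- : (H :&: Q) * P = H by rewrite group_modr // mulQP; apply/setIidPl.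
rewrite abelianM (abelianS sHQ_Q' abQ') abP /=.
by rewrite centsC (subset_trans sHQ_Q') // centsC.
Qed.

Lemma kernel_sub_overgroup (H : {group gT}) :
  P \subset H -> ~~ (H :&: Q \subset Q^`(1)) -> Q \subset H.
Proof.
move=> sPH nsHQ_Q'; have [_ _ _ nQP _] := sdprod_context defG.
have nQ'Q : Q \subset 'N(Q^`(1)) by exact: normal_norm (der_normal 1 Q).
have nQ'HQ : H :&: Q \subset 'N(Q^`(1)) by rewrite subIset // nQ'Q orbT.
have nHQP : P \subset 'N(H :&: Q) by rewrite normsI // (subset_trans sPH (normG H)).
have nQ'P : P \subset 'N(Q^`(1)) by rewrite (subset_trans cQ'P) ?cent_sub.
have [_ minQ] := mingroupP irrP.
have HQ_Q : (H :&: Q)%G / Q^`(1) = Q / Q^`(1).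
  apply: minQ; last by rewrite quotientS ?subsetIr.
  by rewrite actsQ ?andbT // -subG1 quotient_sub1.
have genQ : 'Phi(Q) <*> (H :&: Q) = Q.
  apply/eqP; rewrite eqEsubset join_subG Phi_sub subsetIr /=.
  rewrite -genM_join sub_gen //; apply: subset_trans (mulSg _ sQ'Phi).
  by rewrite -quotientSK // -HQ_Q.
by have := Phi_nongen genQ; rewrite genGid => <-; exact: subsetIl.
Qed.

Lemma nonabelian_overgroup_eq (H : {group gT}) :
  P \subset H -> H \subset G -> ~~ abelian H -> H :=: G.
Proof.
move=> sPH sHG nabH; have [_ _ mulQP _ _] := sdprod_context defG.
have sQH : Q \subset H.
  apply: kernel_sub_overgroup => //; apply: contra nabH.
  exact: overgroup_abelian.
by apply/eqP; rewrite eqEsubset sHG -mulQP mul_subG.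
Qed.

End NonabelianOvergroups.

Lemma special_qgroup_abelian_der1 q (gT : finGroupType) (Q : {group gT}) :
  special_qgroup q Q -> abelian Q^`(1).
Proof.
case=> [/abelem_abelian abQ | [_ _ _ /abelem_abelian //]].
exact: abelianS (der_sub 1 Q) abQ.
Qed.

Theorem mainTheorem10 (gT : finGroupType) (p q : nat) (G Q P : {group gT}) :
  prime p -> prime q -> p != q ->
  Q \in 'Syl_q(G) -> P \in 'Syl_p(G) ->
  Q ><| P = G ->
  cyclic P -> ~~ (P <| G) -> ~~ abelian G ->
  special_qgroup q Q ->
  P \subset 'C(Q^`(1)) ->
  acts_irreducibly P (Q / Q^`(1)) 'Q ->
  exponent_critical G.
Proof.
rewrite !inE => p_pr _ _ sylQ sylP defG cycP not_nPG _ specQ cQ'P irrP.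
have [_ sPG _ _ _] := sdprod_context defG.
have [a cardP] : exists a, #|P| = (p ^ a.+1)%N.
  case: (logn p #|P|) (card_pgroup (pHall_pgroup sylP)) => [P1 | a]; last by exists a.
  have /eqP P1' : P :==: 1 by rewrite trivg_card1 P1.
  by rewrite P1' normal1 in not_nPG.
have dvd_P_expG : #|P| %| exponent G by rewrite -(exponent_cyclic cycP) exponentS.
move=> expG; rewrite expG cardP in dvd_P_expG.
have [H /andP[ltHG nabH] dvd_P_expH] :=
  pfactor_dvdn_biglcm p_pr (fun H _ => exponent_gt0 H) dvd_P_expG.
have sHG := proper_sub ltHG.
have [g gG sPgH] : exists2 g, g \in G & P :^ g \subset H.
  by apply: Sylow_subJ_dvd_card sylP sHG _; rewrite cardP (dvdn_trans dvd_P_expH) ?exponent_dvdn.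
have sQ'Phi : Q^`(1) \subset 'Phi(Q) by rewrite (Phi_joing (pHall_pgroup sylQ)) joing_subl.
have sPHg : P \subset H :^ g^-1 by rewrite -sub_conjg.
have sHgG : H :^ g^-1 \subset G by rewrite sub_conjgV conjGid.
have nabHg : ~~ abelian (H :^ g^-1) by rewrite abelianJ.
have := nonabelian_overgroup_eq defG (cyclic_abelian cycP)
  (special_qgroup_abelian_der1 specQ) sQ'Phi cQ'P irrP sPHg sHgG nabHg.
move/(canRL (conjsgKV g)); rewrite conjGid // => eqHG.
by rewrite eqHG properxx in ltHG.
Qed.
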